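(* Let $\mathcal{T}=(V,\mathsf{p})$ and $\tilde{\mathcal{T}}=(V,\tilde{\mathsf{p}})$ be directed forests on the same vertex set such that $\mathcal{T}$ is thinner than $\tilde{\mathcal{T}}$. Then for every $k\in\mathbb{N}$, the $k$-th power $\mathcal{T}^k$ is thinner than $\tilde{\mathcal{T}}^k$.
   Context: A directed forest is a pair $\mathcal{T}=(V,\mathsf{p})$ where $V$ is a nonempty set and $\mathsf{p}\colon V\to V$ satisfies: if $n\in\mathbb{N}$, $v\in V$ and $\mathsf{p}^n(v)=v$, then $\mathsf{p}(v)=v$. Roots: $\mathrm{root}(\mathcal{T})=\{v:\mathsf{p}(v)=v\}$. $\mathcal{T}_1=(V,\mathsf{p}_1)$ is thinner than $\mathcal{T}_2=(V,\mathsf{p}_2)$ if $\mathsf{p}_1(v)\in\{v,\mathsf{p}_2(v)\}$ for all $v\in V$. For $k\in\mathbb{N}$ the $k$-th power of $\mathcal{T}=(V,\mathsf{p})$ is $\mathcal{T}^k=(V,\mathsf{p}^{[k]})$, where $\mathsf{p}^{[k]}(v)=\mathsf{p}^k(v)$ if $\mathsf{p}^{k-1}(v)\notin\mathrm{root}(\mathcal{T})$ and $\mathsf{p}^{[k]}(v)=v$ if $\mathsf{p}^{k-1}(v)\in\mathrm{root}(\mathcal{T})$ (here $\mathsf{p}^0=\mathrm{id}_V$); $\mathcal{T}^k$ is a directed forest. *)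

From Stdlib Require Import Arith ClassicalEpsilon.

Fixpoint iter {V : Type} (p : V -> V) (n : nat) (v : V) : V :=
  match n with
  | O => v
  | S n' => p (iter p n' v)
  end.

Definition directed_forest (V : Type) (p : V -> V) : Prop :=
  inhabited V /\
  forall (n : nat) (v : V), 1 <= n -> iter p n v = v -> p v = v.

Definition is_root {V : Type} (p : V -> V) (v : V) : Prop := p v = v.

Definition thinner {V : Type} (p1 p2 : V -> V) : Prop :=
  forall v : V, p1 v = v \/ p1 v = p2 v.

Definition power {V : Type} (p : V -> V) (k : nat) (v : V) : V :=
  if excluded_middle_informative (is_root p (iter p (k - 1) v))
  then v else iter p k v.

From Stdlib Require Import Arith Lia ClassicalEpsilon.

(* If the p-orbit of v meets no root during its first k - 1 steps, then,
   p being thinner than pt, every one of these steps is also a pt-step, so the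
   two orbits agree up to step k and p^(k-1)(v) is not a pt-root either; hence
   both powers move v to the same vertex. Otherwise p^[k] fixes v. *)

Lemma iter_root_stable {V : Type} (p : V -> V) (v : V) (i j : nat) :
  is_root p (iter p j v) -> j <= i -> iter p i v = iter p j v.
Proof.
  intros Hroot Hji. induction Hji as [|i Hji IH].
  - reflexivity.
  - simpl. rewrite IH. exact Hroot.
Qed.

Lemma iter_not_root_before {V : Type} (p : V -> V) (v : V) (i j : nat) :
  ~ is_root p (iter p i v) -> j <= i -> ~ is_root p (iter p j v).
Proof.
  intros Hnot Hji Hroot. apply Hnot. unfold is_root.
  rewrite (iter_root_stable p v i j Hroot Hji). exact Hroot.
Qed.

Lemma thinner_root {V : Type} (p pt : V -> V) (v : V) :
  thinner p pt -> is_root pt v -> is_root p v.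
Proof.
  unfold is_root. intros Hth Hroot.
  destruct (Hth v) as [E|E]; rewrite E; [reflexivity | exact Hroot].
Qed.

Lemma thinner_iter_eq {V : Type} (p pt : V -> V) (v : V) (n : nat) :
  thinner p pt -> (forall j, j < n -> ~ is_root p (iter p j v)) ->
  iter p n v = iter pt n v.
Proof.
  intros Hth. induction n as [|n IH]; intros Hnot.
  - reflexivity.
  - simpl. rewrite <- IH by (intros j Hj; apply Hnot; lia).
    destruct (Hth (iter p n v)) as [E|E].
    + exfalso. exact (Hnot n (Nat.lt_succ_diag_r n) E).
    + exact E.
Qed.

Lemma power_root {V : Type} (p : V -> V) (k : nat) (v : V) :
  is_root p (iter p (k - 1) v) -> power p k v = v.
Proof.
  unfold power. intros Hroot.
  destruct (excluded_middle_informative _) as [_|Hnot];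
    [reflexivity | contradiction].
Qed.

Lemma power_not_root {V : Type} (p : V -> V) (k : nat) (v : V) :
  ~ is_root p (iter p (k - 1) v) -> power p k v = iter p k v.
Proof.
  unfold power. intros Hnot.
  destruct (excluded_middle_informative _) as [Hroot|_];
    [contradiction | reflexivity].
Qed.

Theorem proposition4p2 (V : Type) (p pt : V -> V) :
  directed_forest V p -> directed_forest V pt -> thinner p pt ->
  forall k : nat, 1 <= k -> thinner (power p k) (power pt k).
Proof.
  intros _ _ Hth k _ v.
  destruct (excluded_middle_informative (is_root p (iter p (k - 1) v)))
    as [Hroot|Hnot].
  - left. exact (power_root p k v Hroot).
  - assert (Hagree : forall n, n <= k -> iter p n v = iter pt n v).
    { intros n Hn. apply thinner_iter_eq; [exact Hth |].
      intros j Hj. apply (iter_not_root_before p v (k - 1)); [exact Hnot | lia]. }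
    assert (Hnot_t : ~ is_root pt (iter pt (k - 1) v)).
    { rewrite <- Hagree by lia. intros Hroot_t.
      exact (Hnot (thinner_root p pt _ Hth Hroot_t)). }
    right. rewrite (power_not_root p k v Hnot), (power_not_root pt k v Hnot_t).
    apply Hagree. lia.
Qed.
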